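(* Let $U$ be a set and $\mathcal{C}\subset\mathcal{P}(U)$ a collection of subsets of $U$ with $\emptyset\in\mathcal{C}$. Then at least one of the following holds: (a) $\mathcal{C}=\mathcal{P}(X)$ for some $X\subset U$; (b) there exists $T\subset U$ with $|T|\ge2$ such that $\mathcal{C}\cap\mathcal{P}(T)=\mathcal{P}(T)-\{T\}$; (c) there exist $S\subset U$ with $|S|\ge2$ and $s\in S$ such that $\{C\in\mathcal{C}:\ s\in C\}\cap\mathcal{P}(S)=\{S\}$.
   Context: $\mathcal{P}(Y)$ denotes the power set of a set $Y$. *)

From mathcomp Require Import all_boot.
Set Implicit Arguments. Unset Strict Implicit. Unset Printing Implicit Defensive.

From mathcomp Require Import all_boot.
Set Implicit Arguments. Unset Strict Implicit. Unset Printing Implicit Defensive.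

(* If some singleton [x] is missing from C although x lies in a member of C,
   a minimal member of C through x gives (c).  Otherwise C contains every
   singleton of its union X; then either C = P(X), or a minimal subset of X
   outside C gives (b): all its proper subsets lie in C, and it is neither
   empty nor a singleton. *)

Section MinimalSets.

Variables (T : finType) (C : {set {set T}}).

Lemma set1_proper_card_gt1 (S : {set T}) x :
  x \in S -> [set x] != S -> 1 < #|S|.
Proof. by move=> xS neq; rewrite -(cards1 x) proper_card // properEneq neq sub1set. Qed.

Lemma minimal_member_through x A :
  A \in C -> x \in A -> [set x] \notin C ->
  exists S : {set T}, [/\ 2 <= #|S|, x \in S & [set B in C | x \in B] :&: powerset S = [set S]].
Proof.
move=> AC xA x1C.
have [S /minsetP [/andP [SC xS] minS] _] :=
  @minset_exists T [pred B | (B \in C) && (x \in B)] A (introT andP (conj AC xA)).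
exists S; split=> //.
  by apply: set1_proper_card_gt1 xS _; apply: contraNneq x1C => ->.
apply/setP => B; rewrite !inE.
have [->|neqBS] := eqVneq B S; first by rewrite SC xS subxx.
apply/negbTE/negP => /andP [/andP [BC xB] BS].
by move: neqBS; rewrite (minS B) ?eqxx //= BC xB.
Qed.

Lemma minimal_nonmember (B : {set T}) :
  set0 \in C -> {in B, forall y, [set y] \in C} -> B \notin C ->
  exists S : {set T}, 2 <= #|S| /\ C :&: powerset S = powerset S :\ S.
Proof.
move=> C0 C1 BC.
have [S /minsetP [SC minS] SB] := @minset_exists T [pred D | D \notin C] B BC.
exists S; split.
  have [y yS] : exists y, y \in S.
    by apply/set0Pn; apply: contraNneq SC => ->.
  have y1C : [set y] \in C by apply: C1; apply: (subsetP SB).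
  by apply: set1_proper_card_gt1 yS _; apply: contraNneq SC => <-.
apply/setP => D; rewrite !inE.
have [->|neqDS] := eqVneq D S; first by rewrite (negbTE SC).
rewrite andbC /=; case: (boolP (D \subset S)) => //= DS.
by apply: contraTT neqDS => DnC; rewrite negbK (minS D DnC DS).
Qed.

End MinimalSets.

Theorem lemma2p4 (U : finType) (C : {set {set U}}) (hC : set0 \in C) :
  (exists X : {set U}, C = powerset X)
  \/ (exists T : {set U}, 2 <= #|T| /\ C :&: powerset T = powerset T :\ T)
  \/ (exists (S : {set U}) (s : U),
        [/\ 2 <= #|S|, s \in S & [set A in C | s \in A] :&: powerset S = [set S]]).
Proof.
have [/existsP [x /existsP [A /and3P [AC xA x1C]]] | ] :=
  boolP [exists x, exists A, [&& A \in C, x \in A & [set x] \notin C]].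
  by right; right; have [S] := minimal_member_through AC xA x1C; exists S, x.
rewrite negb_exists => /forallP all_set1.
have set1C x A : A \in C -> x \in A -> [set x] \in C.
  move=> AC xA; apply: contraR (all_set1 x) => x1C.
  by apply/existsP; exists A; rewrite AC xA x1C.
set X := \bigcup_(A in C) A.
have CX : C \subset powerset X by apply/subsetP => A AC; rewrite inE bigcup_sup.
have [CXeq|] := eqVneq C (powerset X); first by left; exists X.
rewrite eqEsubset CX /= => /subsetPn [B]; rewrite inE => BX BC.
right; left; apply: minimal_nonmember hC _ BC => y /(subsetP BX) /bigcupP [A AC yA].
exact: set1C yA.
Qed.
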